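(* Let $R_2=\sup_{p\ge0}p\,\big(1-F(2p)\big)$, the maximal revenue from offering one positional good at price $p$ in addition to a free low-level position. Then $$R_2\ \ge\ \tfrac12\sup_{s\in\mathcal S(0)}\int_0^{\bar\theta}J(\theta)s(\theta)\,dF(\theta).$$
   Context: Let $0<\bar\theta<\infty$, $\Theta=[0,\bar\theta]$, $F$ a cdf on $\Theta$ with continuous, strictly positive density $f$, $dF=f\,d\theta$, extended by $F(x)=1$ for $x\ge\bar\theta$; $J(\theta)=\theta-\frac{1-F(\theta)}{f(\theta)}$. For bounded measurable $a,b$ on $\Theta$, write $b\in\mathrm{MPS}(a)$ if $\int_x^{\bar\theta}b\,dF\le\int_x^{\bar\theta}a\,dF$ for all $x\in\Theta$, with equality at $x=0$. $\mathcal S(0)$ is the set of nondecreasing $s:\Theta\to[0,1]$ with $s\in\mathrm{MPS}(F)$. The supremum on the right is the maximal revenue when exclusion is impossible. *)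

From Stdlib Require Import Reals.
From Coquelicot Require Import Coquelicot.
Open Scope R_scope.

Definition inTheta (tb x : R) : Prop := 0 <= x <= tb.

Definition cdf_with_density (tb : R) (F f : R -> R) : Prop :=
  (forall x, inTheta tb x ->
     filterlim f (within (inTheta tb) (locally x)) (locally (f x))) /\
  (forall x, inTheta tb x -> 0 < f x) /\
  (forall x, inTheta tb x -> F x = RInt f 0 x) /\
  F tb = 1 /\
  (forall x, tb <= x -> F x = 1).

Definition Jvv (F f : R -> R) (t : R) : R := t - (1 - F t) / f t.

Definition MPS (tb : R) (f : R -> R) (a b : R -> R) : Prop :=
  (forall x, inTheta tb x ->
     RInt (fun t => b t * f t) x tb <= RInt (fun t => a t * f t) x tb) /\
  RInt (fun t => b t * f t) 0 tb = RInt (fun t => a t * f t) 0 tb.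

Definition S0 (tb : R) (F f : R -> R) (s : R -> R) : Prop :=
  (forall x y, inTheta tb x -> inTheta tb y -> x <= y -> s x <= s y) /\
  (forall x, inTheta tb x -> 0 <= s x <= 1) /\
  MPS tb f F s.

Definition R2 (F : R -> R) : Rbar :=
  Lub_Rbar (fun r => exists p, 0 <= p /\ r = p * (1 - F (2 * p))).

Definition noExclRev (tb : R) (F f : R -> R) : Rbar :=
  Lub_Rbar (fun r => exists s, S0 tb F f s /\
                      r = RInt (fun t => Jvv F f t * s t * f t) 0 tb).

(** Writing [H x = x (1 - F x)] for the revenue of posting price [x], the
    virtual value satisfies [J f = - H'].  Integrating by parts against
    the nondecreasing weight [s] (valued in [0,1]) and using [H 0 = H tb = 0]
    gives [∫ J s dF = ∫ H ds <= max H].  Finally [max H <= 2 R_2], because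
    [x (1 - F x) = 2 p (1 - F (2 p))] at [p = x / 2]. *)

From Stdlib Require Import Reals Lra Classical.
From Coquelicot Require Import Coquelicot.
Open Scope R_scope.

Lemma RInt_not_ex (g : R -> R) a b : ~ ex_RInt g a b -> RInt g a b = 0.
Proof.
intros Hnex; unfold RInt, iota, lim; simpl; unfold R_complete_lim.
set (E := fun x : R => _).
destruct (Lub_Rbar_correct E) as [Hub _].
assert (HE : forall x, E x).
{ intros x y Hy; exfalso; apply Hnex; exists y; exact Hy. }
destruct (Lub_Rbar E) as [l| |]; simpl; auto.
specialize (Hub (l + 1) (HE _)); simpl in Hub; lra.
Qed.

Lemma le_of_le_add_div_INR (x y c : R) :
  (forall N, (0 < N)%nat -> x <= y + c / INR N) -> x <= y.
Proof.
intros Hle; apply Rle_plus_epsilon; intros eps Heps.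
destruct (Rle_or_lt c 0) as [Hc | Hc].
- specialize (Hle 1%nat Nat.lt_0_1); simpl in Hle; lra.
- destruct (archimed_cor1 (eps / c)) as [N [HN HN0]].
  { apply Rdiv_lt_0_compat; lra. }
  specialize (Hle N HN0).
  assert (HNpos : 0 < INR N) by now apply lt_0_INR.
  assert (c / INR N < eps).
  { apply (Rmult_lt_compat_l c) in HN; [|lra].
    unfold Rdiv in *; rewrite <- Rmult_assoc, Rinv_r_simpl_m in HN by lra; exact HN. }
  lra.
Qed.

Section MonotoneWeight.

Variables (H h s : R -> R) (a b M : R).
Hypothesis a_le_b : a <= b.
Hypothesis H_derive : forall x, is_derive H x (h x).
Hypothesis h_cont : forall x, continuous h x.
Hypothesis s_nondecr : forall x y, a <= x -> x <= y -> y <= b -> s x <= s y.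
Hypothesis H_le : forall x, a <= x <= b -> H x <= M.

Let g t := - h t * s t.
Hypothesis g_int : ex_RInt g a b.

Lemma ex_RInt_weight_sub u v : a <= u -> u <= v -> v <= b -> ex_RInt g u v.
Proof.
intros Hau Huv Hvb.
apply (ex_RInt_Chasles_2 g a u v); [lra|].
apply (ex_RInt_Chasles_1 g a v b); [lra|exact g_int].
Qed.

Lemma deriv_bounded_above : exists K, 0 <= K /\ forall t, a <= t <= b -> h t <= K.
Proof.
destruct (continuity_ab_maj h a b a_le_b) as [t0 [Ht0 _]].
{ intros c _; apply continuity_pt_filterlim, h_cont. }
exists (Rmax 0 (h t0)); split; [apply Rmax_l|].
intros t Ht; eapply Rle_trans; [apply Ht0, Ht | apply Rmax_r].
Qed.

Section DerivativeBound.

Variable K : R.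
Hypothesis K_ge0 : 0 <= K.
Hypothesis h_le_K : forall t, a <= t <= b -> h t <= K.

(* On [u, v] we have [- h t s t <= - h t s v + K (s v - s u)], since
   [h t (s v - s t) <= K (s v - s u)]. *)
Lemma RInt_weight_piece_le u v : a <= u -> u <= v -> v <= b ->
  RInt g u v <= s v * (H u - H v) + K * (s v - s u) * (v - u).
Proof.
intros Hau Huv Hvb.
set (c := K * (s v - s u)).
assert (Hmaj : is_RInt (fun t => - h t * s v + c) u v
                 (s v * (H u - H v) + c * (v - u))).
{ apply (is_RInt_ext (fun t => plus (scal (s v) (opp (h t))) c)).
  { intros t _; unfold plus, scal, opp; simpl; unfold mult; simpl; ring. }
  replace (s v * (H u - H v) + c * (v - u))
    with (plus (scal (s v) (opp (minus (H v) (H u)))) (scal (v - u) c))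
    by (unfold plus, scal, opp, minus, plus, opp; simpl; unfold mult; simpl; ring).
  apply (is_RInt_plus (V := R_NormedModule)); [|apply (is_RInt_const (V := R_NormedModule))].
  apply (is_RInt_scal (V := R_NormedModule)), (is_RInt_opp (V := R_NormedModule)).
  apply (is_RInt_derive (V := R_CompleteNormedModule) H h); intros;
    [apply H_derive | apply h_cont]. }
rewrite <- (is_RInt_unique _ _ _ _ Hmaj).
apply RInt_le; [exact Huv|now apply ex_RInt_weight_sub|eexists; exact Hmaj|].
intros t Ht; unfold g, c.
assert (s u <= s t) by (apply s_nondecr; lra).
assert (s t <= s v) by (apply s_nondecr; lra).
assert (h t <= K) by (apply h_le_K; lra).
assert (0 <= (K - h t) * (s v - s t)) by (apply Rmult_le_pos; lra).
assert (0 <= K * (s t - s u)) by (apply Rmult_le_pos; lra).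
nra.
Qed.

(* Abel summation over the grid [a + k D], using [H <= M] at the grid points. *)
Lemma RInt_weight_grid_le D k : 0 <= D -> a + INR k * D <= b ->
  let x := a + INR k * D in
  RInt g a x <= H a * s a - H x * s x + (M + K * D) * (s x - s a).
Proof.
intros HD; induction k as [|k IHk]; intros Hk x; unfold x.
- rewrite Rmult_0_l, Rplus_0_r, RInt_point; unfold zero; simpl; lra.
- rewrite S_INR in Hk |- *.
  set (u := a + INR k * D) in IHk.
  replace (a + (INR k + 1) * D) with (u + D) by (unfold u; ring).
  assert (Hau : a <= u) by (unfold u; assert (0 <= INR k) by apply pos_INR; nra).
  assert (Hub : u + D <= b) by (unfold u; lra).
  specialize (IHk ltac:(unfold u in Hub |- *; lra)).
  rewrite <- (RInt_Chasles g a u (u + D)) by (apply ex_RInt_weight_sub; lra).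
  assert (Hpiece := RInt_weight_piece_le u (u + D) Hau ltac:(lra) Hub).
  assert (s a <= s u) by (apply s_nondecr; lra).
  assert (s u <= s (u + D)) by (apply s_nondecr; lra).
  assert (H u <= M) by (apply H_le; lra).
  assert (0 <= (s (u + D) - s u) * (M - H u)) by (apply Rmult_le_pos; lra).
  replace (u + D - u) with D in Hpiece by ring.
  unfold plus; simpl; nra.
Qed.

Lemma RInt_weight_le_grid_error N : (0 < N)%nat ->
  RInt g a b <= H a * s a - H b * s b + M * (s b - s a)
                + K * (b - a) * (s b - s a) / INR N.
Proof.
intros HN.
assert (HNpos : 0 < INR N) by now apply lt_0_INR.
assert (Hgrid := RInt_weight_grid_le ((b - a) / INR N) N).
replace (a + INR N * ((b - a) / INR N)) with b in Hgrid by (field; lra).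
assert (0 <= (b - a) / INR N) by (apply Rdiv_le_0_compat; lra).
specialize (Hgrid ltac:(lra) ltac:(lra)); simpl in Hgrid.
unfold Rdiv in *; lra.
Qed.

End DerivativeBound.

Lemma RInt_weight_le : RInt g a b <= H a * s a - H b * s b + M * (s b - s a).
Proof.
destruct deriv_bounded_above as [K [HK0 HK]].
apply (le_of_le_add_div_INR _ _ (K * (b - a) * (s b - s a))); intros N HN.
assert (Hle := RInt_weight_le_grid_error K HK0 HK N HN); lra.
Qed.

End MonotoneWeight.

Definition clamp (a b x : R) : R := Rmax a (Rmin b x).

Lemma clamp_in a b x : a <= b -> a <= clamp a b x <= b.
Proof. intros; unfold clamp, Rmax, Rmin; repeat destruct Rle_dec; lra. Qed.

Lemma clamp_id a b x : a <= x <= b -> clamp a b x = x.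
Proof. intros; unfold clamp, Rmax, Rmin; repeat destruct Rle_dec; lra. Qed.

Lemma clamp_dist a b x y : a <= b ->
  Rabs (clamp a b y - clamp a b x) <= Rabs (y - x).
Proof.
intros; unfold clamp, Rmax, Rmin, Rabs.
repeat destruct Rle_dec; repeat destruct Rcase_abs; lra.
Qed.

Lemma continuous_comp_clamp (f : R -> R) a b x : a <= b ->
  (forall y, a <= y <= b ->
     filterlim f (within (fun z => a <= z <= b) (locally y)) (locally (f y))) ->
  continuous (fun y => f (clamp a b y)) x.
Proof.
intros Hab Hf.
apply (filterlim_comp _ _ _ (clamp a b) f _
         (within (fun z => a <= z <= b) (locally (clamp a b x)))).
- intros P [eps Heps]; exists eps; intros y Hy.
  apply Heps; [|now apply clamp_in].
  apply (Rle_lt_trans _ (Rabs (y - x))); [now apply clamp_dist | exact Hy].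
- now apply Hf, clamp_in.
Qed.

Section Revenue.

Variable g : R -> R.
Hypothesis g_cont : forall x, continuous g x.

Lemma is_derive_revenue x :
  is_derive (fun p => p * (1 - RInt g 0 p)) x (1 - RInt g 0 x - x * g x).
Proof.
auto_derive; [|change (RInt (fun y => g y) 0 x) with (RInt g 0 x); ring].
repeat split.
- apply (ex_RInt_continuous (V := R_CompleteNormedModule)); intros; apply g_cont.
- apply filter_forall; intros; apply continuity_pt_filterlim, g_cont.
Qed.

Lemma continuous_revenue_derive x :
  continuous (fun p => 1 - RInt g 0 p - p * g p) x.
Proof.
apply (continuous_minus (fun p => 1 - RInt g 0 p) (fun p => p * g p)).
- apply (continuous_minus (fun _ => 1) (RInt g 0)); [apply continuous_const|].
  apply ex_derive_continuous; eexists.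
  apply (is_derive_RInt (V := R_CompleteNormedModule) g (RInt g 0) 0).
  + apply filter_forall; intros; apply (RInt_correct (V := R_CompleteNormedModule)).
    apply (ex_RInt_continuous (V := R_CompleteNormedModule)); intros; apply g_cont.
  + apply g_cont.
- apply (continuous_mult (fun p => p) g); [apply continuous_id | apply g_cont].
Qed.

End Revenue.

Lemma Jvv_mul_density (F f : R -> R) t :
  0 < f t -> Jvv F f t * f t = - (1 - F t - t * f t).
Proof. intros; unfold Jvv; field; lra. Qed.

Lemma RInt_clamp_density tb F f x : cdf_with_density tb F f -> inTheta tb x ->
  RInt (fun t => f (clamp 0 tb t)) 0 x = F x.
Proof.
intros (_ & _ & HF & _) Hx; rewrite (HF x Hx).
apply RInt_ext; intros t Ht; rewrite clamp_id; [reflexivity|].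
destruct Hx; revert Ht; unfold Rmin, Rmax; destruct Rle_dec; lra.
Qed.

Lemma RInt_Jvv_weight_le_revenue tb F f s M :
  0 < tb -> cdf_with_density tb F f ->
  (forall x y, inTheta tb x -> inTheta tb y -> x <= y -> s x <= s y) ->
  (forall x, inTheta tb x -> 0 <= s x <= 1) -> 0 <= M ->
  (forall x, inTheta tb x -> x * (1 - F x) <= M) ->
  RInt (fun t => Jvv F f t * s t * f t) 0 tb <= M.
Proof.
intros Htb Hd Hmon Hs HM HHM.
(* Extending [f] continuously outside [0, tb] makes [H] a C^1 function on all of [R]. *)
set (fe t := f (clamp 0 tb t)).
assert (Hfe : forall x, continuous fe x).
{ intros x; apply continuous_comp_clamp; [lra|apply (proj1 Hd)]. }
set (H p := p * (1 - RInt fe 0 p)); set (h p := 1 - RInt fe 0 p - p * fe p).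
assert (HF : forall x, inTheta tb x -> RInt fe 0 x = F x)
  by (intros; now apply RInt_clamp_density).
assert (Hint : forall t, Rmin 0 tb < t < Rmax 0 tb ->
           Jvv F f t * s t * f t = - h t * s t).
{ intros t Ht; rewrite Rmin_left, Rmax_right in Ht by lra.
  assert (Htheta : inTheta tb t) by (unfold inTheta; lra).
  unfold h; rewrite (HF t Htheta); unfold fe; rewrite clamp_id by exact Htheta.
  rewrite Rmult_assoc, (Rmult_comm (s t)), <- Rmult_assoc, Jvv_mul_density;
    [ring | apply (proj1 (proj2 Hd)), Htheta]. }
destruct (classic (ex_RInt (fun t => Jvv F f t * s t * f t) 0 tb)) as [Hex|Hnex];
  [|now rewrite RInt_not_ex].
rewrite (RInt_ext _ (fun t => - h t * s t) _ _ Hint).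
assert (Hle := RInt_weight_le H h s 0 tb M ltac:(lra)
  (is_derive_revenue fe Hfe) (continuous_revenue_derive fe Hfe)).
eapply Rle_trans; [apply Hle|].
- intros x y Hx Hxy Hy; apply Hmon; unfold inTheta; lra.
- intros x Hx; unfold H; rewrite HF by exact Hx; now apply HHM.
- exact (ex_RInt_ext _ _ _ _ Hint Hex).
- assert (HH0 : H 0 = 0) by (unfold H; ring).
  assert (HHtb : H tb = 0).
  { unfold H; rewrite HF, (proj1 (proj2 (proj2 (proj2 Hd)))) by (unfold inTheta; lra); ring. }
  assert (Hs0 := Hs 0 ltac:(unfold inTheta; lra)).
  assert (Hstb := Hs tb ltac:(unfold inTheta; lra)).
  rewrite HH0, HHtb; nra.
Qed.

Lemma R2_ub F p : 0 <= p -> Rbar_le (p * (1 - F (2 * p))) (R2 F).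
Proof. intros Hp; apply Lub_Rbar_correct; now exists p. Qed.

Lemma noExclRev_le tb F f c :
  (forall s, S0 tb F f s -> RInt (fun t => Jvv F f t * s t * f t) 0 tb <= c) ->
  Rbar_le (noExclRev tb F f) c.
Proof. intros Hc; apply Lub_Rbar_correct; intros r [s [Hs ->]]; now apply Hc. Qed.

Lemma Rbar_mult_half_le (l : Rbar) m :
  Rbar_le l (2 * m) -> Rbar_le (Rbar_mult (1 / 2) l) m.
Proof.
destruct l as [l| |]; simpl; try tauto; [lra|].
destruct Rle_dec as [Hle|]; [destruct Rle_lt_or_eq_dec|]; simpl; tauto || lra.
Qed.

Theorem mainTheorem13 (tb : R) (F f : R -> R) :
  0 < tb ->
  cdf_with_density tb F f ->
  Rbar_le (Rbar_mult (Finite (1/2)) (noExclRev tb F f)) (R2 F).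
Proof.
intros Htb Hd.
assert (HR0 := R2_ub F 0 (Rle_refl 0)).
destruct (R2 F) as [m| |] eqn:Hm; [|now destruct Rbar_mult|now rewrite Rmult_0_l in HR0].
assert (Hm0 : 0 <= m) by (simpl in HR0; lra).
apply Rbar_mult_half_le, noExclRev_le; intros s [Hmon [Hs _]].
apply RInt_Jvv_weight_le_revenue; auto; [lra|].
intros x Hx.
assert (Hx2 := R2_ub F (x / 2) ltac:(unfold inTheta in Hx; lra)).
rewrite Hm in Hx2; simpl in Hx2.
replace (2 * (x / 2)) with x in Hx2 by field; lra.
Qed.
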